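(* There exist uncountably many W-subshifts $X \subset \{0,1\}^{\mathbb Z}$ which are neither sofic nor strongly irreducible.
   Context: A subshift of $A^{\mathbb Z}$ is a closed shift-invariant subset, with shift $(gx)(h)=x(h-g)$. $X$ is of finite type if there are finite $\Omega\subset\mathbb Z$ and $\mathcal P\subset A^\Omega$ with $X=\{x:(gx)|_\Omega\in\mathcal P\ \forall g\}$; $X$ is sofic if it is the image of a subshift of finite type $Y\subset B^{\mathbb Z}$ ($B$ finite) under a surjective continuous shift-equivariant map. $X$ is strongly irreducible if there is finite $\Delta\subset\mathbb Z$ such that for all finite $\Omega_1,\Omega_2$ with $(\Omega_1-\Delta)\cap\Omega_2=\varnothing$ and all $x_1,x_2\in X$ there is $x\in X$ agreeing with $x_1$ on $\Omega_1$ and with $x_2$ on $\Omega_2$. $L(X)$ is the set of finite words (including the empty word) appearing as $x(i)\cdots x(j)$ in some $x\in X$. $X$ is a W-subshift if there is an integer $n_0\ge0$ such that for all $u,v\in L(X)$ there is $c\in L(X)$ with $|c|\le n_0$ and $ucv\in L(X)$. *)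

From Stdlib Require Import ZArith List.
Import ListNotations.
Open Scope Z_scope.

Definition shift {A : Type} (g : Z) (x : Z -> A) : Z -> A := fun h => x (h - g).

(* Closed in the product topology (A finite, discrete): a configuration all of whose
   central windows [-n,n] are seen in elements of X belongs to X. *)
Definition closed_set {A : Type} (X : (Z -> A) -> Prop) : Prop :=
  forall x : Z -> A,
    (forall n : nat, exists y, X y /\
        forall i, - Z.of_nat n <= i <= Z.of_nat n -> y i = x i) ->
    X x.

Definition shift_invariant {A : Type} (X : (Z -> A) -> Prop) : Prop :=
  forall (g : Z) (x : Z -> A), X x -> X (shift g x).

Definition subshift {A : Type} (X : (Z -> A) -> Prop) : Prop :=
  closed_set X /\ shift_invariant X.

Definition finite_type (B : Type) : Prop := exists l : list B, forall b, In b l.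

(* Finite type: finite Omega (a list) and P a set of patterns on Omega
   (a pattern on Omega = list of values indexed along Omega). *)
Definition finite_type_subshift {B : Type} (Y : (Z -> B) -> Prop) : Prop :=
  exists (Om : list Z) (P : list B -> Prop),
    forall y : Z -> B, Y y <-> (forall g : Z, P (map (shift g y) Om)).

Definition sofic {A : Type} (X : (Z -> A) -> Prop) : Prop :=
  exists (B : Type) (Y : (Z -> B) -> Prop) (phi : (Z -> B) -> (Z -> A)),
    finite_type B /\
    finite_type_subshift Y /\
    (forall x, X x <-> exists y, Y y /\ forall i, phi y i = x i) /\
    (forall (g : Z) y, Y y -> forall i, phi (shift g y) i = shift g (phi y) i) /\
    (forall y, Y y -> forall n : nat, exists m : nat, forall y', Y y' ->
        (forall i, - Z.of_nat m <= i <= Z.of_nat m -> y' i = y i) ->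
        forall i, - Z.of_nat n <= i <= Z.of_nat n -> phi y' i = phi y i).

Definition strongly_irreducible {A : Type} (X : (Z -> A) -> Prop) : Prop :=
  exists Delta : list Z,
    forall Om1 Om2 : list Z,
      (forall a d, In a Om1 -> In d Delta -> ~ In (a - d) Om2) ->
      forall x1 x2, X x1 -> X x2 ->
        exists x, X x /\ (forall i, In i Om1 -> x i = x1 i)
                      /\ (forall i, In i Om2 -> x i = x2 i).

Definition in_language {A : Type} (X : (Z -> A) -> Prop) (w : list A) : Prop :=
  w = [] \/
  exists (x : Z -> A) (i : Z), X x /\
    forall (k : nat) (d : A), (k < length w)%nat -> nth k w d = x (i + Z.of_nat k).

Definition W_subshift {A : Type} (X : (Z -> A) -> Prop) : Prop :=
  subshift X /\
  exists n0 : nat, forall u v : list A,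
    in_language X u -> in_language X v ->
    exists c : list A, in_language X c /\ (length c <= n0)%nat /\
                       in_language X (u ++ c ++ v).

(* For T : nat -> bool, [gap_shift T] consists of the configurations in which every run of
   0s between two consecutive 1s has a length that is either 1 mod 6 or of the form
   6 n^2 + 3 with T n = true.  All allowed gaps are odd, so any two 1s lie at even distance,
   which rules out strong irreducibility.  Gaps of length 1 mod 6 are always allowed, so two
   words can be joined by a word 0^r 1 0^t with r, t <= 5: the shift is a W-subshift.
   A sofic shift satisfies a pumping lemma: inside a long run of 0s one can delete or
   duplicate a block of bounded length d.  Applied to a single gap g = 6 n^2 + 3 with n large,
   both g - d and g + d would be allowed, which is impossible, so the shift is not sofic
   when T is true infinitely often.  The gap 6 n^2 + 3 records T n, and a diagonal argument
   produces, for any enumeration e, a T whose shift is not listed. *)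

From Stdlib Require Import ZArith List Lia Bool Classical ClassicalEpsilon.
Import ListNotations.
Open Scope Z_scope.

Definition allowed_gap (T : nat -> bool) (g : Z) : Prop :=
  (exists s, 0 <= s /\ g = 6 * s + 1) \/
  (exists n : nat, T n = true /\ g = 6 * Z.of_nat n * Z.of_nat n + 3).

Definition gap_shift (T : nat -> bool) (x : Z -> bool) : Prop :=
  forall i j, i < j -> x i = true -> x j = true ->
    (forall k, i < k < j -> x k = false) -> allowed_gap T (j - i - 1).

Definition single_gap (g : Z) : Z -> bool := fun i => (i =? 0) || (i =? g + 1).

Lemma allowed_gap_odd T g : allowed_gap T g -> 0 <= g /\ g mod 2 = 1.
Proof.
  intros [[s [Hs ->]]|[n [_ ->]]].
  - Z.div_mod_to_equations; lia.
  - assert (0 <= Z.of_nat n * Z.of_nat n) by nia. Z.div_mod_to_equations; nia.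
Qed.

Lemma allowed_gap_square T (n : nat) :
  allowed_gap T (6 * Z.of_nat n * Z.of_nat n + 3) <-> T n = true.
Proof.
  split; [|intro Hn; right; exists n; auto].
  intros [[s [_ E]]|[k [Hk E]]].
  - exfalso. assert (0 <= Z.of_nat n * Z.of_nat n) by nia. Z.div_mod_to_equations; nia.
  - enough (k = n) by (subst; auto).
    destruct (Nat.lt_total k n) as [H|[H|H]]; auto; nia.
Qed.

Lemma gap_shift_single_gap T g : 0 <= g -> gap_shift T (single_gap g) <-> allowed_gap T g.
Proof.
  intro Hg; unfold single_gap; split.
  - intro H. replace g with ((g + 1) - 0 - 1) by lia. apply H.
    + lia.
    + reflexivity.
    + now rewrite Z.eqb_refl, orb_true_r.
    + intros k Hk. destruct (Z.eqb_spec k 0), (Z.eqb_spec k (g + 1)); [lia..|reflexivity].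
  - intros H i j Hij Hi Hj _.
    destruct (Z.eqb_spec i 0), (Z.eqb_spec i (g + 1)), (Z.eqb_spec j 0), (Z.eqb_spec j (g + 1));
      simpl in *; try discriminate; try lia.
    now replace (j - i - 1) with g by lia.
Qed.

Lemma gap_shift_ext T x y : (forall i, x i = y i) -> gap_shift T x -> gap_shift T y.
Proof.
  intros E Hx i j Hij Hi Hj Hz. rewrite <- E in Hi, Hj.
  apply Hx; auto. intros k Hk. rewrite E. auto.
Qed.

Lemma first_true_between (x : Z -> bool) i j : i < j -> x j = true ->
  exists q, i < q <= j /\ x q = true /\ forall k, i < k < q -> x k = false.
Proof.
  remember (Z.to_nat (j - i)) as n eqn:Hn. revert j Hn.
  induction n as [n IH] using (well_founded_induction lt_wf). intros j Hn Hij Hj.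
  destruct (classic (exists k, i < k < j /\ x k = true)) as [[k [Hk Hxk]]|Hno].
  - destruct (IH (Z.to_nat (k - i)) ltac:(lia) k eq_refl) as [q Hq]; auto; [lia|].
    exists q; intuition lia.
  - exists j; repeat split; auto; try lia.
    intros k Hk. destruct (x k) eqn:E; auto. exfalso; eauto.
Qed.

Lemma last_true_between (x : Z -> bool) i j : i < j -> x i = true ->
  exists q, i <= q < j /\ x q = true /\ forall k, q < k < j -> x k = false.
Proof.
  intros Hij Hi.
  destruct (first_true_between (fun s => x (- s)) (- j) (- i)) as [q [Hq [Hxq Hz]]];
    [lia|now rewrite Z.opp_involutive|].
  exists (- q); repeat split; [lia..|auto|].
  intros k Hk. rewrite <- (Z.opp_involutive k). apply Hz. lia.
Qed.

Lemma gap_shift_even_distance T x i j : gap_shift T x -> i < j -> x i = true -> x j = true ->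
  (j - i) mod 2 = 0.
Proof.
  intro HX. remember (Z.to_nat (j - i)) as n eqn:Hn. revert i Hn.
  induction n as [n IH] using (well_founded_induction lt_wf). intros i Hn Hij Hi Hj.
  destruct (first_true_between x i j) as [q [Hq [Hxq Hz]]]; auto.
  pose proof (allowed_gap_odd _ _ (HX i q ltac:(lia) Hi Hxq Hz)).
  destruct (Z.eq_dec q j) as [->|Hqj]; [Z.div_mod_to_equations; lia|].
  pose proof (IH (Z.to_nat (j - q)) ltac:(lia) q eq_refl ltac:(lia) Hxq).
  Z.div_mod_to_equations; lia.
Qed.

Lemma gap_shift_subshift T : subshift (gap_shift T).
Proof.
  split.
  - intros x Hx i j Hij Hi Hj Hz.
    destruct (Hx (Z.to_nat (Z.abs i + Z.abs j))) as [y [Hy Hag]].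
    apply Hy; auto.
    + rewrite Hag; auto; lia.
    + rewrite Hag; auto; lia.
    + intros k Hk. rewrite Hag; [apply Hz; auto|lia].
  - intros g x Hx i j Hij Hi Hj Hz. unfold shift in *.
    replace (j - i - 1) with ((j - g) - (i - g) - 1) by lia.
    apply Hx; auto; [lia|].
    intros k Hk. replace k with ((k + g) - g) by lia. apply Hz. lia.
Qed.

Lemma list_abs_bound (L : list Z) : exists R, 0 <= R /\ forall o, In o L -> Z.abs o <= R.
Proof.
  induction L as [|o L [R [HR HL]]]; [exists 0; split; [lia|simpl; tauto]|].
  exists (Z.max (Z.abs o) R). split; [lia|].
  intros o' [<-|Ho']; [lia|]. specialize (HL o' Ho'). lia.
Qed.

Lemma gap_shift_not_strongly_irreducible T : ~ strongly_irreducible (gap_shift T).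
Proof.
  intros [Delta HD].
  destruct (list_abs_bound Delta) as [R [HR HDelta]].
  set (p := 2 * R + 1).
  destruct (HD [0] [p]) with (x1 := fun t => t =? 0) (x2 := fun t => t =? p)
    as [x [Hx [H1 H2]]].
  - intros a d [<-|[]] Hd [E|[]]. specialize (HDelta d Hd). unfold p in E. lia.
  - intros i j Hij Hi Hj _. apply Z.eqb_eq in Hi, Hj. lia.
  - intros i j Hij Hi Hj _. apply Z.eqb_eq in Hi, Hj. lia.
  - specialize (H1 0 (or_introl eq_refl)). specialize (H2 p (or_introl eq_refl)).
    rewrite Z.eqb_refl in H1, H2.
    pose proof (gap_shift_even_distance T x 0 p Hx ltac:(lia) H1 H2).
    unfold p in *. Z.div_mod_to_equations; lia.
Qed.

Lemma pad_after_last_one T (x : Z -> bool) a : exists r, 0 <= r <= 5 /\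
  forall q, q < a -> x q = true -> (forall k, q < k < a -> x k = false) ->
    allowed_gap T (a + r - q - 1).
Proof.
  destruct (classic (exists q, q < a /\ x q = true)) as [[q0 [Hq0 Hxq0]]|Hno].
  - destruct (last_true_between x q0 a Hq0 Hxq0) as [q1 [Hq1 [Hxq1 Hz1]]].
    exists ((2 - a + q1) mod 6). split; [Z.div_mod_to_equations; lia|].
    intros q Hq Hxq Hz.
    assert (q = q1) as ->.
    { destruct (Z.lt_total q q1) as [H|[H|H]]; auto.
      - rewrite Hz in Hxq1 by lia; discriminate.
      - rewrite Hz1 in Hxq by lia; discriminate. }
    left. exists ((a + (2 - a + q1) mod 6 - q1 - 1) / 6). Z.div_mod_to_equations; lia.
  - exists 0. split; [lia|]. intros q Hq Hxq. exfalso; eauto.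
Qed.

Lemma pad_before_first_one T (x : Z -> bool) : exists t, 0 <= t <= 5 /\
  forall q, 0 <= q -> x q = true -> (forall k, 0 <= k < q -> x k = false) ->
    allowed_gap T (t + q).
Proof.
  destruct (classic (exists q, 0 <= q /\ x q = true)) as [[q0 [Hq0 Hxq0]]|Hno].
  - destruct (first_true_between x (-1) q0 ltac:(lia) Hxq0) as [q1 [Hq1 [Hxq1 Hz1]]].
    exists ((1 - q1) mod 6). split; [Z.div_mod_to_equations; lia|].
    intros q Hq Hxq Hz.
    assert (q = q1) as ->.
    { destruct (Z.lt_total q q1) as [H|[H|H]]; auto.
      - rewrite Hz1 in Hxq by lia; discriminate.
      - rewrite Hz in Hxq1 by lia; discriminate. }
    left. exists (((1 - q1) mod 6 + q1) / 6). Z.div_mod_to_equations; lia.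
  - exists 0. split; [lia|]. intros q Hq Hxq. exfalso; eauto.
Qed.

Definition splice (x1 x2 : Z -> bool) (a r t : Z) : Z -> bool := fun s =>
  if s <? a then x1 s
  else if s <? a + r + 1 + t then s =? a + r
  else x2 (s - (a + r + 1 + t)).

Lemma splice_left x1 x2 a r t s : s < a -> splice x1 x2 a r t s = x1 s.
Proof. intro. unfold splice. destruct (Z.ltb_spec s a); [auto|lia]. Qed.

Lemma splice_middle x1 x2 a r t s : a <= s < a + r + 1 + t ->
  splice x1 x2 a r t s = (s =? a + r).
Proof.
  intro. unfold splice. destruct (Z.ltb_spec s a); [lia|].
  destruct (Z.ltb_spec s (a + r + 1 + t)); [auto|lia].
Qed.

Lemma splice_right x1 x2 a r t s : 0 <= r -> 0 <= t -> a + r + 1 + t <= s ->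
  splice x1 x2 a r t s = x2 (s - (a + r + 1 + t)).
Proof.
  intros. unfold splice. destruct (Z.ltb_spec s a); [lia|].
  destruct (Z.ltb_spec s (a + r + 1 + t)); [lia|auto].
Qed.

Lemma gap_shift_splice T x1 x2 a r t :
  gap_shift T x1 -> gap_shift T x2 -> 0 <= r -> 0 <= t ->
  (forall q, q < a -> x1 q = true -> (forall k, q < k < a -> x1 k = false) ->
     allowed_gap T (a + r - q - 1)) ->
  (forall q, 0 <= q -> x2 q = true -> (forall k, 0 <= k < q -> x2 k = false) ->
     allowed_gap T (t + q)) ->
  gap_shift T (splice x1 x2 a r t).
Proof.
  intros Hx1 Hx2 Hr Ht Hpad1 Hpad2 i j Hij Hi Hj Hz.
  set (b := a + r + 1 + t) in *.
  destruct (Z_lt_ge_dec j a); [|destruct (Z_lt_ge_dec i b)].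
  - rewrite splice_left in Hi, Hj by lia.
    apply Hx1; auto. intros k Hk. rewrite <- (splice_left x1 x2 a r t) by lia. apply Hz; lia.
  - assert (Hmid : forall s, a <= s < b -> splice x1 x2 a r t s = (s =? a + r))
      by (intros; apply splice_middle; unfold b in *; lia).
    destruct (Z_lt_ge_dec i a).
    + assert (j = a + r) as ->.
      { destruct (Z_lt_ge_dec j b).
        - rewrite Hmid in Hj by lia. now apply Z.eqb_eq.
        - specialize (Hz (a + r) ltac:(unfold b in *; lia)).
          rewrite Hmid, Z.eqb_refl in Hz by (unfold b in *; lia). discriminate. }
      rewrite splice_left in Hi by lia. apply Hpad1; auto.
      intros k Hk. rewrite <- (splice_left x1 x2 a r t) by lia. apply Hz. lia.
    + rewrite Hmid in Hi by lia. apply Z.eqb_eq in Hi as ->.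
      assert (b <= j).
      { destruct (Z_lt_ge_dec j b); [|lia]. rewrite Hmid in Hj by lia.
        apply Z.eqb_eq in Hj. lia. }
      rewrite splice_right in Hj by lia.
      replace (j - (a + r) - 1) with (t + (j - b)) by (unfold b; lia).
      apply Hpad2; auto; [lia|]. intros k Hk.
      specialize (Hz (k + b) ltac:(unfold b in *; lia)).
      rewrite splice_right in Hz by (unfold b in *; lia).
      rewrite <- Hz. f_equal. unfold b; lia.
  - rewrite splice_right in Hi, Hj by lia.
    replace (j - i - 1) with ((j - b) - (i - b) - 1) by lia.
    apply Hx2; auto; [lia|]. intros k Hk.
    specialize (Hz (k + b) ltac:(lia)).
    rewrite splice_right in Hz by (unfold b in *; lia).
    rewrite <- Hz. f_equal. unfold b; lia.
Qed.

Definition padding_word (r t : nat) : list bool := repeat false r ++ true :: repeat false t.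

Lemma nth_padding_word (r t j : nat) d : (j < r + 1 + t)%nat ->
  nth j (padding_word r t) d = (j =? r)%nat.
Proof.
  intro H. unfold padding_word. destruct (Nat.lt_ge_cases j r).
  - rewrite app_nth1, nth_repeat_lt by (rewrite ?repeat_length; auto).
    symmetry; apply Nat.eqb_neq; lia.
  - rewrite app_nth2, repeat_length by (rewrite repeat_length; auto).
    destruct (j - r)%nat eqn:E; simpl.
    + symmetry; apply Nat.eqb_eq; lia.
    + rewrite nth_repeat_lt by lia. symmetry; apply Nat.eqb_neq; lia.
Qed.

Lemma gap_shift_W T : W_subshift (gap_shift T).
Proof.
  split; [apply gap_shift_subshift|].
  exists 11%nat. intros u v Hu Hv.
  destruct Hu as [->|[x1 [i1 [Hx1 Hu]]]].
  { exists []; repeat split; [now left|simpl; lia|exact Hv]. }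
  destruct Hv as [->|[x2 [i2 [Hx2 Hv]]]].
  { exists []; repeat split; [now left|simpl; lia|]. rewrite !app_nil_r. right; eauto. }
  set (y1 := fun s => x1 (s + i1)). set (y2 := fun s => x2 (s + i2)).
  assert (Hy1 : gap_shift T y1).
  { apply (gap_shift_ext T (shift (- i1) x1)); [intro; unfold shift, y1; f_equal; lia|].
    now apply gap_shift_subshift. }
  assert (Hy2 : gap_shift T y2).
  { apply (gap_shift_ext T (shift (- i2) x2)); [intro; unfold shift, y2; f_equal; lia|].
    now apply gap_shift_subshift. }
  set (a := Z.of_nat (length u)).
  destruct (pad_after_last_one T y1 a) as [r [Hr Hpad1]].
  destruct (pad_before_first_one T y2) as [t [Ht Hpad2]].
  set (c := padding_word (Z.to_nat r) (Z.to_nat t)).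
  assert (Hlc : length c = (Z.to_nat r + 1 + Z.to_nat t)%nat).
  { unfold c, padding_word. rewrite length_app; simpl; rewrite !repeat_length; lia. }
  exists c. split; [|split].
  - right. exists (fun s => s =? r), 0. split.
    + intros i j Hij Hi Hj _. apply Z.eqb_eq in Hi, Hj. lia.
    + intros k d Hk. unfold c. rewrite nth_padding_word by lia.
      destruct (Nat.eqb_spec k (Z.to_nat r)), (Z.eqb_spec (0 + Z.of_nat k) r); auto; lia.
  - lia.
  - right. exists (splice y1 y2 a r t), 0. split; [now apply gap_shift_splice|].
    intros k d Hk. rewrite !length_app in Hk.
    destruct (Nat.lt_ge_cases k (length u)).
    + rewrite app_nth1, Hu, splice_left by (auto; lia). unfold y1. f_equal. lia.
    + rewrite app_nth2 by auto.
      destruct (Nat.lt_ge_cases (k - length u) (length c)).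
      * rewrite app_nth1 by auto. unfold c. rewrite nth_padding_word, splice_middle by lia.
        destruct (Nat.eqb_spec (k - length u) (Z.to_nat r)),
          (Z.eqb_spec (0 + Z.of_nat k) (a + r)); auto; lia.
      * rewrite app_nth2, Hv, splice_right by lia. unfold y2. f_equal. lia.
Qed.

Fixpoint words {C : Type} (l : list C) (n : nat) : list (list C) :=
  match n with
  | O => [[]]
  | S n => flat_map (fun b => map (cons b) (words l n)) l
  end.

Lemma words_length {C : Type} (l : list C) n : length (words l n) = (length l ^ n)%nat.
Proof.
  induction n as [|n IH]; simpl; auto.
  rewrite <- IH. clear IH. generalize (words l n) as W. intro W.
  induction l as [|b l IHl]; simpl; auto.
  now rewrite length_app, length_map, IHl.
Qed.

Lemma In_words {C : Type} (l : list C) : (forall c, In c l) -> forall w, In w (words l (length w)).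
Proof.
  intros Hl w. induction w as [|b w IH]; simpl; auto.
  apply in_flat_map. exists b. split; auto. now apply in_map.
Qed.

Lemma NoDup_map_seq {C : Type} (f : nat -> C) n a :
  (forall i j, (a <= i < j)%nat -> (j < a + n)%nat -> f i <> f j) -> NoDup (map f (seq a n)).
Proof.
  revert a. induction n as [|n IH]; intros a H; simpl; constructor.
  - intros Hin. apply in_map_iff in Hin as [k [Hk Hin]]. apply in_seq in Hin.
    apply (H a k); auto; lia.
  - apply IH. intros i j Hij Hj. apply H; lia.
Qed.

Lemma pigeonhole_words {C : Type} (l : list C) (Hl : forall c, In c l) (L : nat)
  (f : nat -> list C) : (forall k, length (f k) = L) ->
  exists i j, (i < j <= length l ^ L)%nat /\ f i = f j.
Proof.
  intro HL. apply NNPP; intro Hno.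
  assert (Hnd : NoDup (map f (seq 0 (S (length l ^ L))))).
  { apply NoDup_map_seq. intros i j Hij Hj E. apply Hno. exists i, j; split; auto; lia. }
  apply (NoDup_incl_length (l' := words l L)) in Hnd.
  - rewrite length_map, length_seq, words_length in Hnd. lia.
  - intros w Hw. apply in_map_iff in Hw as [k [<- _]]. rewrite <- (HL k). now apply In_words.
Qed.

Lemma eventually_forall_in {C : Type} (L : list C) (F : C -> nat -> Prop) :
  (forall c, In c L -> exists k, forall m, (k <= m)%nat -> F c m) ->
  exists K, forall c, In c L -> forall m, (K <= m)%nat -> F c m.
Proof.
  induction L as [|c0 L IH]; intros H; [exists 0%nat; simpl; tauto|].
  destruct (H c0 (or_introl eq_refl)) as [k Hk].
  destruct IH as [K HK]; [intros c Hc; apply H; simpl; auto|].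
  exists (Nat.max k K). intros c [<-|Hc] m Hm; [apply Hk|apply HK]; auto; lia.
Qed.

Section ClusterPoint.
Context {B : Type}.
Variables (l : list B) (ys : nat -> Z -> B).
Hypothesis Hl : forall b, In b l.

Definition recurrent_on (n : nat) (w : Z -> B) : Prop :=
  forall k, exists m, (k <= m)%nat /\ forall i, Z.abs i < Z.of_nat n -> ys m i = w i.

Definition extend_at (n : nat) (w : Z -> B) (b : B * B) : Z -> B := fun i =>
  if i =? - Z.of_nat n then fst b else if i =? Z.of_nat n then snd b else w i.

(* König's lemma: one of the finitely many extensions of [w] to [-n, n] still recurs. *)
Lemma recurrent_on_extend n w : recurrent_on n w ->
  {w' | recurrent_on (S n) w' /\ forall i, Z.abs i < Z.of_nat n -> w' i = w i}.
Proof.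
  intro Hw. apply constructive_indefinite_description. apply NNPP; intro Hno.
  destruct (eventually_forall_in (list_prod l l) (fun b m =>
      ~ forall i, Z.abs i < Z.of_nat (S n) -> ys m i = extend_at n w b i)) as [K HK].
  { intros b _. apply NNPP; intro Hb. apply Hno. exists (extend_at n w b). split.
    - intro k. apply NNPP; intro Hk. apply Hb. exists k. intros m Hm Hag. apply Hk. eauto.
    - intros i Hi. unfold extend_at.
      destruct (Z.eqb_spec i (- Z.of_nat n)), (Z.eqb_spec i (Z.of_nat n)); auto; lia. }
  destruct (Hw K) as [m [Hm Hag]].
  apply (HK (ys m (- Z.of_nat n), ys m (Z.of_nat n))) with m; auto.
  - now apply in_prod.
  - intros i Hi. unfold extend_at; simpl.
    destruct (Z.eqb_spec i (- Z.of_nat n)) as [->|]; auto.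
    destruct (Z.eqb_spec i (Z.of_nat n)) as [->|]; auto.
    apply Hag. lia.
Qed.

Lemma recurrent_on_0 : recurrent_on 0 (ys 0).
Proof. intro k. exists k. split; auto. intros i Hi. lia. Qed.

Fixpoint recurrent_chain (n : nat) : {w | recurrent_on n w} :=
  match n with
  | O => exist _ (ys 0) recurrent_on_0
  | S n' =>
      let (w, Hw) := recurrent_chain n' in
      exist _ (proj1_sig (recurrent_on_extend n' w Hw))
              (proj1 (proj2_sig (recurrent_on_extend n' w Hw)))
  end.

Lemma recurrent_chain_coherent k n i : Z.abs i < Z.of_nat n ->
  proj1_sig (recurrent_chain (k + n)) i = proj1_sig (recurrent_chain n) i.
Proof.
  intro Hi. induction k as [|k IH]; simpl; auto.
  destruct (recurrent_chain (k + n)) as [w Hw] eqn:E. simpl in *.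
  destruct (recurrent_on_extend (k + n) w Hw) as [w' [Hw' Hag]]. simpl.
  rewrite Hag by lia. exact IH.
Qed.

Definition cluster_point (i : Z) : B := proj1_sig (recurrent_chain (S (Z.to_nat (Z.abs i)))) i.

Lemma cluster_point_recurrent n : recurrent_on n cluster_point.
Proof.
  intro k. destruct (proj2_sig (recurrent_chain n) k) as [m [Hm Hag]]. exists m. split; auto.
  intros i Hi. rewrite Hag by auto. unfold cluster_point.
  destruct (Nat.le_ge_cases n (S (Z.to_nat (Z.abs i)))).
  - replace (S (Z.to_nat (Z.abs i))) with ((S (Z.to_nat (Z.abs i)) - n) + n)%nat by lia.
    now rewrite recurrent_chain_coherent by lia.
  - replace n with ((n - S (Z.to_nat (Z.abs i))) + S (Z.to_nat (Z.abs i)))%nat by lia.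
    now rewrite recurrent_chain_coherent by lia.
Qed.

End ClusterPoint.

Definition cut_index (p d s : Z) : Z := if s <? p then s else s + d.
Definition dup_index (p d s : Z) : Z := if s <? p + d then s else s - d.

(* [cut p d x] deletes the block [x p ... x (p + d - 1)], [dup p d x] repeats it. *)
Definition cut {C : Type} (p d : Z) (x : Z -> C) : Z -> C := fun s => x (cut_index p d s).
Definition dup {C : Type} (p d : Z) (x : Z -> C) : Z -> C := fun s => x (dup_index p d s).

Lemma cut_index_window {C : Type} (y : Z -> C) p d R :
  (forall h, Z.abs h <= R -> y (p + h) = y (p + d + h)) ->
  forall i h, Z.abs h <= R -> y (cut_index p d (i + h)) = y (cut_index p d i + h).
Proof.
  intros Hper i h Hh. unfold cut_index.
  destruct (Z.ltb_spec (i + h) p), (Z.ltb_spec i p); [reflexivity| | |f_equal; lia].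
  - transitivity (y (p + (i + h - p))); [f_equal; lia|]. rewrite Hper by lia. f_equal; lia.
  - transitivity (y (p + d + (i + h - p))); [f_equal; lia|]. rewrite <- Hper by lia. f_equal; lia.
Qed.

Lemma dup_index_window {C : Type} (y : Z -> C) p d R :
  (forall h, Z.abs h <= R -> y (p + h) = y (p + d + h)) ->
  forall i h, Z.abs h <= R -> y (dup_index p d (i + h)) = y (dup_index p d i + h).
Proof.
  intros Hper i h Hh. unfold dup_index.
  destruct (Z.ltb_spec (i + h) (p + d)), (Z.ltb_spec i (p + d)); [reflexivity| | |f_equal; lia].
  - transitivity (y (p + d + (i + h - p - d))); [f_equal; lia|]. rewrite <- Hper by lia. f_equal; lia.
  - transitivity (y (p + (i + h - d - p))); [f_equal; lia|]. rewrite Hper by lia. f_equal; lia.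
Qed.

Section SoficPumping.
Variables (A B : Type) (X : (Z -> A) -> Prop) (Y : (Z -> B) -> Prop)
  (phi : (Z -> B) -> Z -> A) (l : list B) (Om : list Z) (P : list B -> Prop) (R0 : Z).
Hypotheses (Hl : forall b, In b l)
  (HY : forall y, Y y <-> forall g, P (map (shift g y) Om))
  (HOm : forall o, In o Om -> Z.abs o <= R0)
  (HX : forall x, X x <-> exists y, Y y /\ forall i, phi y i = x i)
  (Hequiv : forall g y, Y y -> forall i, phi (shift g y) i = shift g (phi y) i)
  (Hcont : forall y, Y y -> forall n : nat, exists m : nat, forall y', Y y' ->
     (forall i, - Z.of_nat m <= i <= Z.of_nat m -> y' i = y i) ->
     forall i, - Z.of_nat n <= i <= Z.of_nat n -> phi y' i = phi y i).

Lemma sft_local y z : Y y ->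
  (forall i, exists c, forall h, Z.abs h <= R0 -> z (i + h) = y (c + h)) -> Y z.
Proof.
  intros Hy Hz. rewrite HY in *. intro g. destruct (Hz (- g)) as [c Hc].
  replace (map (shift g z) Om) with (map (shift (- c) y) Om); [apply Hy|].
  apply map_ext_in. intros o Ho. unfold shift.
  replace (o - g) with (- g + o) by lia. rewrite Hc by auto. f_equal; lia.
Qed.

Lemma sft_shift g y : Y y -> Y (shift g y).
Proof.
  intro Hy. apply (sft_local y); auto. intro i. exists (i - g). intros h _. unfold shift. f_equal; lia.
Qed.

Lemma sft_reindex (idx : Z -> Z) R y : Y y -> R0 <= R ->
  (forall i h, Z.abs h <= R -> y (idx (i + h)) = y (idx i + h)) -> Y (fun s => y (idx s)).
Proof.
  intros Hy HR Hw. apply (sft_local y); auto. intro i. exists (idx i). intros h Hh. apply Hw. lia.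
Qed.

Lemma sft_closed z :
  (forall n : nat, exists y, Y y /\ forall i, Z.abs i < Z.of_nat n -> y i = z i) -> Y z.
Proof.
  intro Hz. apply HY. intro g.
  destruct (Hz (Z.to_nat (Z.abs g + R0 + 1))) as [y [Hy Hag]].
  replace (map (shift g z) Om) with (map (shift g y) Om); [now apply HY|].
  apply map_ext_in. intros o Ho. unfold shift. specialize (HOm o Ho). apply Hag. lia.
Qed.

Lemma sft_cluster_point (ys : nat -> Z -> B) : (forall m, Y (ys m)) ->
  exists y, Y y /\ forall n, recurrent_on ys n y.
Proof.
  intro Hys. exists (cluster_point l ys Hl). split; [|apply cluster_point_recurrent].
  apply sft_closed. intro n. destruct (cluster_point_recurrent l ys Hl n 0%nat) as [m [_ Hag]].
  exists (ys m). auto.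
Qed.

Lemma phi_uniformly_continuous : exists m : nat, forall y y', Y y -> Y y' ->
  (forall i, - Z.of_nat m <= i <= Z.of_nat m -> y' i = y i) -> phi y' 0 = phi y 0.
Proof.
  apply NNPP; intro Hno.
  assert (Hbad : forall m : nat, exists yy : (Z -> B) * (Z -> B),
    Y (fst yy) /\ Y (snd yy) /\
    (forall i, - Z.of_nat m <= i <= Z.of_nat m -> snd yy i = fst yy i) /\
    phi (snd yy) 0 <> phi (fst yy) 0).
  { intro m. apply NNPP; intro H. apply Hno. exists m. intros y y' Hy Hy' Hag.
    apply NNPP; intro Hne. apply H. exists (y, y'). simpl; auto. }
  destruct (choice _ Hbad) as [f Hf].
  destruct (sft_cluster_point (fun m => fst (f m))) as [ys [Hys Hrec]]; [apply Hf|].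
  destruct (Hcont ys Hys 0%nat) as [ms Hms].
  destruct (Hrec (S ms) ms) as [m [Hm Hag]].
  destruct (Hf m) as [H1 [H2 [H3 H4]]]. apply H4.
  transitivity (phi ys 0).
  - apply Hms; auto; try lia. intros i Hi. rewrite H3 by lia. apply Hag. lia.
  - symmetry. apply Hms; auto; try lia. intros i Hi. apply Hag. lia.
Qed.

Lemma phi_sliding_block : exists m : nat, forall y y' j c, Y y -> Y y' ->
  (forall h, Z.abs h <= Z.of_nat m -> y' (j + h) = y (c + h)) -> phi y' j = phi y c.
Proof.
  destruct phi_uniformly_continuous as [m Hm]. exists m. intros y y' j c Hy Hy' Hag.
  transitivity (phi (shift (- j) y') 0); [rewrite Hequiv by auto; unfold shift; f_equal; lia|].
  transitivity (phi (shift (- c) y) 0); [|rewrite Hequiv by auto; unfold shift; f_equal; lia].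
  apply Hm; try apply sft_shift; auto.
  intros i Hi. unfold shift. replace (i - - j) with (j + i) by lia.
  replace (i - - c) with (c + i) by lia. apply Hag. lia.
Qed.

(* Pigeonhole on the windows of a preimage: some window of [y] recurs within distance
   [length l ^ L], and the preimage can be cut or pumped between the two occurrences. *)
Lemma sofic_pumping_of_presentation : exists N, forall x a, X x ->
  exists p d, a <= p /\ 1 <= d /\ p + d <= a + N /\ X (cut p d x) /\ X (dup p d x).
Proof.
  destruct phi_sliding_block as [m Hm].
  set (R := Z.max (Z.of_nat m) R0).
  set (L := Z.to_nat (2 * R + 1)).
  exists (Z.of_nat (length l ^ L)).
  intros x a Hx. apply HX in Hx as [y [Hy Hyx]].
  set (window := map (fun t => Z.of_nat t - R) (seq 0 L)).
  destruct (pigeonhole_words l Hl L (fun k => map (fun h => y (a + Z.of_nat k + h)) window))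
    as [i [j [Hij E]]].
  { intro k. unfold window. now rewrite !length_map, length_seq. }
  set (p := a + Z.of_nat i). set (d := Z.of_nat j - Z.of_nat i).
  assert (Hper : forall h, Z.abs h <= R -> y (p + h) = y (p + d + h)).
  { intros h Hh. replace (p + d + h) with (a + Z.of_nat j + h) by (unfold p, d; lia).
    apply (ext_in_map E). unfold window. apply in_map_iff.
    exists (Z.to_nat (h + R)). split; [lia|]. apply in_seq. unfold L. lia. }
  assert (Hreindex : forall idx, (forall i h, Z.abs h <= R -> y (idx (i + h)) = y (idx i + h)) ->
    X (fun s => x (idx s))).
  { intros idx Hw. assert (Hy' : Y (fun s => y (idx s))) by (apply (sft_reindex idx R); auto; lia).
    apply HX. exists (fun s => y (idx s)). split; auto.
    intro s. rewrite <- Hyx. apply Hm; auto. intros h Hh. apply Hw. lia. }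
  exists p, d. repeat split; try (unfold p, d; lia).
  - apply Hreindex. now apply cut_index_window.
  - apply Hreindex. now apply dup_index_window.
Qed.

End SoficPumping.

Theorem sofic_pumping {A : Type} (X : (Z -> A) -> Prop) : sofic X -> exists N, forall x a, X x ->
  exists p d, a <= p /\ 1 <= d /\ p + d <= a + N /\ X (cut p d x) /\ X (dup p d x).
Proof.
  intros [B [Y [phi [[l Hl] [[Om [P HY]] [HX [Hequiv Hcont]]]]]]].
  destruct (list_abs_bound Om) as [R0 [_ HOm]].
  exact (sofic_pumping_of_presentation A B X Y phi l Om P R0 Hl HY HOm HX Hequiv Hcont).
Qed.

Lemma cut_single_gap g p d : 1 <= p -> 0 <= d -> p + d <= g + 1 ->
  forall s, cut p d (single_gap g) s = single_gap (g - d) s.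
Proof.
  intros Hp Hd Hpd s. unfold cut, cut_index, single_gap.
  destruct (Z.ltb_spec s p);
    repeat match goal with |- context [?a =? ?b] => destruct (Z.eqb_spec a b) end;
    simpl; auto; lia.
Qed.

Lemma dup_single_gap g p d : 1 <= p -> 0 <= d -> p + d <= g + 1 ->
  forall s, dup p d (single_gap g) s = single_gap (g + d) s.
Proof.
  intros Hp Hd Hpd s. unfold dup, dup_index, single_gap.
  destruct (Z.ltb_spec s (p + d));
    repeat match goal with |- context [?a =? ?b] => destruct (Z.eqb_spec a b) end;
    simpl; auto; lia.
Qed.

(* Distinct values [6 k^2 + 3] are at least [6 (2n - 1)] apart from [6 n^2 + 3], and
   [g - d], [g + d] cannot both be [1 mod 6] when [g = 3 mod 6]. *)
Lemma square_gap_not_pumpable T (n : nat) d : 1 <= d <= Z.of_nat n ->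
  allowed_gap T (6 * Z.of_nat n * Z.of_nat n + 3 - d) ->
  allowed_gap T (6 * Z.of_nat n * Z.of_nat n + 3 + d) -> False.
Proof.
  intros Hd H1 H2.
  assert (Hsq : forall (k : nat) e, 1 <= Z.abs e <= Z.of_nat n ->
    6 * Z.of_nat n * Z.of_nat n + 3 + e <> 6 * Z.of_nat k * Z.of_nat k + 3).
  { intros k e He E. destruct (Nat.lt_total k n) as [H|[->|H]]; nia. }
  destruct H1 as [[s1 [_ E1]]|[k1 [_ E1]]]; [|apply (Hsq k1 (- d)); lia].
  destruct H2 as [[s2 [_ E2]]|[k2 [_ E2]]]; [|apply (Hsq k2 d); lia].
  set (m := Z.of_nat n * Z.of_nat n) in *.
  assert (E : 12 * m + 6 = 6 * (s1 + s2) + 2) by nia. lia.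
Qed.

Lemma gap_shift_not_sofic T : (forall M, exists n, (M <= n)%nat /\ T n = true) ->
  ~ sofic (gap_shift T).
Proof.
  intros Hinf Hsofic.
  destruct (sofic_pumping _ Hsofic) as [N HN].
  destruct (Hinf (Z.to_nat N)) as [n [HnN Tn]].
  set (g := 6 * Z.of_nat n * Z.of_nat n + 3).
  assert (Hg : gap_shift T (single_gap g))
    by (apply gap_shift_single_gap; [unfold g; nia|]; now apply allowed_gap_square).
  destruct (HN _ 1 Hg) as [p [d [Hp [Hd [HpdN [Hcut Hdup]]]]]].
  assert (Hdn : d <= Z.of_nat n) by lia.
  assert (Hng : Z.of_nat n <= g) by (unfold g; nia).
  apply (square_gap_not_pumpable T n d); [lia| |].
  - apply gap_shift_single_gap; [lia|].
    apply (gap_shift_ext T _ _ (cut_single_gap g p d ltac:(lia) ltac:(lia) ltac:(lia)) Hcut).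
  - apply gap_shift_single_gap; [lia|].
    apply (gap_shift_ext T _ _ (dup_single_gap g p d ltac:(lia) ltac:(lia) ltac:(lia)) Hdup).
Qed.

(* [T] disagrees with [e k] on the gap [6 (2k)^2 + 3], and is true at every odd index. *)
Lemma gap_shift_diagonal (e : nat -> (Z -> bool) -> Prop) : exists T,
  (forall M, exists n, (M <= n)%nat /\ T n = true) /\
  forall k, exists x, ~ (gap_shift T x <-> e k x).
Proof.
  set (diag := fun n : nat => single_gap (6 * Z.of_nat n * Z.of_nat n + 3)).
  exists (fun n => if Nat.even n then
    (if excluded_middle_informative (e (Nat.div2 n) (diag n)) then false else true) else true).
  split.
  - intro M. exists (2 * M + 1)%nat. split; [lia|]. now rewrite Nat.even_odd.
  - intro k. exists (diag (2 * k)%nat). unfold diag.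
    rewrite gap_shift_single_gap, allowed_gap_square by lia.
    rewrite Nat.even_even, Nat.div2_double. fold (diag (2 * k)%nat).
    destruct (excluded_middle_informative (e k (diag (2 * k)%nat))); intuition discriminate.
Qed.

Theorem proposition4p8 :
  ~ exists e : nat -> ((Z -> bool) -> Prop),
      forall X : (Z -> bool) -> Prop,
        W_subshift X -> ~ sofic X -> ~ strongly_irreducible X ->
        exists n : nat, forall x, X x <-> e n x.
Proof.
  intros [e He].
  destruct (gap_shift_diagonal e) as [T [Hinf Hdiag]].
  destruct (He (gap_shift T)) as [k Hk].
  - apply gap_shift_W.
  - now apply gap_shift_not_sofic.
  - apply gap_shift_not_strongly_irreducible.
  - destruct (Hdiag k) as [x Hx]. exact (Hx (Hk x)).
Qed.
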